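(* Let $d\in\mathbb{N}$, $d\geq 2$, $r>0$ and let $A\subseteq \mathbb{R}^{d}$ be $r$-separated. Then there exists a $16\max\{\frac{3d}{r},1\}$-bilipschitz mapping $\Phi\colon \mathbb{R}^{d}\to\mathbb{R}^{d}$ such that $\Phi(A)\subseteq \mathbb{Z}^{d}$.
   Context: $A$ is $r$-separated if $\|a-a'\|\geq r$ for all distinct $a,a'\in A$ (Euclidean norm). A mapping is $L$-bilipschitz if it is injective and both it and its inverse are $L$-Lipschitz. *)

From mathcomp Require Import all_boot all_order all_algebra.
From Stdlib Require Import Reals.
From mathcomp Require Import Rstruct.
Set Implicit Arguments. Unset Strict Implicit. Unset Printing Implicit Defensive.
Import Order.TTheory GRing.Theory Num.Theory.
Local Open Scope ring_scope.

Definition eucl_norm (d : nat) (x : 'rV[R]_d) : R :=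
  Num.sqrt (\sum_(i < d) x 0 i ^+ 2).

Definition dist (d : nat) (x y : 'rV[R]_d) : R := eucl_norm (x - y).

Definition r_separated (d : nat) (r : R) (A : 'rV[R]_d -> Prop) : Prop :=
  forall a a', A a -> A a' -> a <> a' -> r <= dist a a'.

Definition lipschitz (d : nat) (L : R) (f : 'rV[R]_d -> 'rV[R]_d) : Prop :=
  forall x y, dist (f x) (f y) <= L * dist x y.

Definition bilipschitz (d : nat) (L : R) (f : 'rV[R]_d -> 'rV[R]_d) : Prop :=
  injective f /\ lipschitz L f /\
  (forall x y, dist x y <= L * dist (f x) (f y)).

Definition is_integer_point (d : nat) (z : 'rV[R]_d) : Prop :=
  forall i, exists k : int, z 0 i = k%:~R.

(* Scale by s = 2 max(3d/r, 1): the points s a, a in A, become 4 sqrt d-separated.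
   Around each of them put a cone of radius rho = 2 sqrt d that moves its apex
   s a to the lattice point floor(s a), at distance at most sqrt d = rho/2, and
   vanishes on the boundary sphere.  The cones have disjoint supports, so the
   glued displacement G is 1/2-Lipschitz; then y |-> y + G y distorts distances
   by a factor between 1/2 and 3/2, and Phi x = s x + G (s x) maps A into Z^d. *)

From mathcomp Require Import all_boot all_order all_algebra.
From Stdlib Require Import Rdefinitions Classical ClassicalEpsilon.
From mathcomp Require Import Rstruct ring lra.
Import Order.TTheory GRing.Theory Num.Theory.
Set Implicit Arguments. Unset Strict Implicit.
Local Open Scope ring_scope.

Section EuclideanNorm.
Variable d : nat.
Implicit Types (x y z : 'rV[R]_d) (c : R).

Definition dot x y : R := \sum_(i < d) x 0 i * y 0 i.

Lemma dotDl x y z : dot (x + y) z = dot x z + dot y z.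
Proof. by rewrite -big_split; apply: eq_bigr => i _; rewrite mxE mulrDl. Qed.

Lemma dotC x y : dot x y = dot y x.
Proof. by apply: eq_bigr => i _; rewrite mulrC. Qed.

Lemma dotDr x y z : dot x (y + z) = dot x y + dot x z.
Proof. by rewrite dotC dotDl !(dotC x). Qed.

Lemma dotZl c x y : dot (c *: x) y = c * dot x y.
Proof. by rewrite mulr_sumr; apply: eq_bigr => i _; rewrite mxE mulrA. Qed.

Lemma dotZr c x y : dot x (c *: y) = c * dot x y.
Proof. by rewrite dotC dotZl dotC. Qed.

Lemma dot_ge0 x : 0 <= dot x x.
Proof. by apply: sumr_ge0 => i _; rewrite -expr2 sqr_ge0. Qed.

Lemma dot_eq0 x : dot x x = 0 -> x = 0.
Proof.
move=> x0; apply/matrixP => i j; rewrite ord1 mxE.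
have /eqP := psumr_eq0P (fun k _ => sqr_ge0 (x 0 k)) x0 (i := j) isT.
by rewrite sqrf_eq0 => /eqP.
Qed.

Lemma lagrange_identity x y :
  \sum_(i < d) \sum_(j < d) (x 0 i * y 0 j - x 0 j * y 0 i) ^+ 2
  = 2 * (dot x x * dot y y - dot x y ^+ 2).
Proof.
have double_sum (f g : 'I_d -> R) :
    (\sum_i f i) * (\sum_j g j) = \sum_i \sum_j f i * g j.
  by rewrite mulr_suml; apply: eq_bigr => i _; rewrite mulr_sumr.
rewrite mulrBr mulr2n mulrDl mul1r {1}double_sum mulrC double_sum expr2 double_sum.
rewrite mulr_sumr -big_split -sumrB /=; apply: eq_bigr => i _.
rewrite mulr_sumr -big_split -sumrB /=; apply: eq_bigr => j _.
ring.
Qed.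

Lemma cauchy_schwarz x y : dot x y ^+ 2 <= dot x x * dot y y.
Proof.
rewrite -subr_ge0 -(pmulr_rge0 _ (ltr0n R 2)) -lagrange_identity.
by do 2![apply: sumr_ge0 => ? _]; apply: sqr_ge0.
Qed.

Lemma eucl_norm_dot x : eucl_norm x = Num.sqrt (dot x x).
Proof. by congr Num.sqrt; apply: eq_bigr => i _; rewrite expr2. Qed.

Lemma eucl_norm_ge0 x : 0 <= eucl_norm x.
Proof. exact: sqrtr_ge0. Qed.

Lemma eucl_norm_sqr x : eucl_norm x ^+ 2 = dot x x.
Proof. by rewrite eucl_norm_dot sqr_sqrtr ?dot_ge0. Qed.

Lemma eucl_norm_eq0 x : eucl_norm x = 0 -> x = 0.
Proof. by move=> x0; apply: dot_eq0; rewrite -eucl_norm_sqr x0 expr0n. Qed.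

Lemma eucl_normZ c x : eucl_norm (c *: x) = `|c| * eucl_norm x.
Proof.
by rewrite !eucl_norm_dot dotZl dotZr mulrA -expr2 sqrtrM ?sqr_ge0 // sqrtr_sqr.
Qed.

Lemma eucl_normN x : eucl_norm (- x) = eucl_norm x.
Proof. by rewrite -scaleN1r eucl_normZ normrN1 mul1r. Qed.

Lemma dot_le_norm x y : dot x y <= eucl_norm x * eucl_norm y.
Proof.
rewrite !eucl_norm_dot -sqrtrM ?dot_ge0 //.
by apply: le_trans (ler_norm _) _; rewrite -sqrtr_sqr ler_wsqrtr ?cauchy_schwarz.
Qed.

Lemma eucl_normD x y : eucl_norm (x + y) <= eucl_norm x + eucl_norm y.
Proof.
rewrite -[_ + eucl_norm y]ger0_norm ?addr_ge0 ?eucl_norm_ge0 // -sqrtr_sqr.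
rewrite eucl_norm_dot ler_wsqrtr // dotDl !dotDr (dotC y x) sqrrD -!eucl_norm_sqr.
by have := dot_le_norm x y; lra.
Qed.

Lemma dist_ge0 x y : 0 <= dist x y.
Proof. exact: eucl_norm_ge0. Qed.

Lemma distC x y : dist x y = dist y x.
Proof. by rewrite /dist -eucl_normN opprB. Qed.

Lemma eucl_norm0 : eucl_norm (0 : 'rV[R]_d) = 0.
Proof. by rewrite -(scale0r 0) eucl_normZ normr0 mul0r. Qed.

Lemma distxx x : dist x x = 0.
Proof. by rewrite /dist subrr eucl_norm0. Qed.

Lemma dist_eq0 x y : dist x y = 0 -> x = y.
Proof. by move/eucl_norm_eq0/eqP; rewrite subr_eq0 => /eqP. Qed.

Lemma distZ c x y : dist (c *: x) (c *: y) = `|c| * dist x y.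
Proof. by rewrite /dist -scalerBr eucl_normZ. Qed.

Lemma dist_triangle x y z : dist x z <= dist x y + dist y z.
Proof. by rewrite /dist -[x - z](subrKA y); apply: eucl_normD. Qed.

Lemma dist_le_norm x y : dist x y <= eucl_norm x + eucl_norm y.
Proof. by rewrite /dist -(eucl_normN y); apply: eucl_normD. Qed.

Lemma dist_dist_le x y z : `|dist x z - dist y z| <= dist x y.
Proof.
rewrite ler_norml; have := dist_triangle x y z; have := dist_triangle y x z.
by rewrite (distC y x); lra.
Qed.

Lemma distN x y : dist (- x) (- y) = dist x y.
Proof. by rewrite /dist -opprD eucl_normN. Qed.

Lemma dist_add_le x y u w : dist (x + u) (y + w) <= dist x y + dist u w.
Proof. by rewrite /dist opprD addrACA; apply: eucl_normD. Qed.

End EuclideanNorm.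

Section Rounding.
Variable d : nat.
Implicit Types x : 'rV[R]_d.

Definition round_vec x : 'rV[R]_d := \row_i (Num.floor (x 0 i))%:~R.

Lemma round_vec_integer x : is_integer_point (round_vec x).
Proof. by move=> i; exists (Num.floor (x 0 i)); rewrite mxE. Qed.

Lemma dist_round_vec_le x : dist (round_vec x) x <= Num.sqrt d%:R.
Proof.
rewrite ler_wsqrtr // -[d in d%:R]card_ord -sumr_const; apply: ler_sum => i _.
rewrite !mxE; have := floor_le (x 0 i); have := floorD1_gt (x 0 i).
by rewrite intrD; nra.
Qed.
End Rounding.

Section LipschitzPerturbation.
Variables (d : nat) (k : R) (G : 'rV[R]_d -> 'rV[R]_d).
Hypothesis G_lip : lipschitz k G.
Implicit Types y : 'rV[R]_d.

Lemma dist_add_lipschitz_le y y' : dist (y + G y) (y' + G y') <= (1 + k) * dist y y'.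
Proof. by apply: le_trans (dist_add_le _ _ _ _) _; have := G_lip y y'; lra. Qed.

Lemma dist_add_lipschitz_ge y y' : (1 - k) * dist y y' <= dist (y + G y) (y' + G y').
Proof.
have := dist_add_le (y + G y) (y' + G y') (- G y) (- G y').
by rewrite !addrK distN; have := G_lip y y'; lra.
Qed.

Lemma bilipschitz_scale_add (L s : R) : 0 < s -> k < 1 ->
  (1 + k) * s <= L -> 1 <= L * ((1 - k) * s) ->
  bilipschitz L (fun x => s *: x + G (s *: x)).
Proof.
move=> s_gt0 k_lt1 upper lower.
have L_ge0 : 0 <= L by nra.
have lower_dist x y : dist x y <= L * dist (s *: x + G (s *: x)) (s *: y + G (s *: y)).
  apply: le_trans (ler_wpM2l L_ge0 (dist_add_lipschitz_ge _ _)).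
  by rewrite distZ gtr0_norm // mulrA mulrA ler_peMl ?dist_ge0 // -mulrA.
split; [|split] => // x y.
  move=> e; apply: dist_eq0; apply: le_anti; rewrite dist_ge0 andbT.
  by have := lower_dist x y; rewrite e distxx mulr0.
apply: le_trans (dist_add_lipschitz_le _ _) _.
by rewrite distZ gtr0_norm // mulrA ler_wpM2r ?dist_ge0.
Qed.
End LipschitzPerturbation.

Section GluedBumps.
Variables (d : nat) (k rho : R) (C : 'rV[R]_d -> Prop) (v : 'rV[R]_d -> 'rV[R]_d).
Hypotheses (k_ge0 : 0 <= k) (rho_gt0 : 0 < rho).
Hypothesis C_sep :
  forall c c', C c -> C c' -> c <> c' -> 2 * rho <= dist c c'.
Hypothesis v_small : forall c, C c -> eucl_norm (v c) <= k * rho.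
Implicit Types (y c : 'rV[R]_d).

Definition near y c := C c /\ dist y c < rho.

Definition bump c y : 'rV[R]_d := (1 - dist y c / rho) *: v c.

(* The choice is canonical: by [near_uniq] at most one centre is near [y]. *)
Definition glued_bump y : 'rV[R]_d :=
  let c := epsilon (inhabits 0) (near y) in
  if excluded_middle_informative (near y c) then bump c y else 0.

Lemma near_uniq y c c' : near y c -> near y c' -> c = c'.
Proof.
move=> [Cc yc] [Cc' yc']; apply: NNPP => cc'.
have := C_sep Cc Cc' cc'; have := dist_triangle c y c'.
by rewrite (distC c y); lra.
Qed.

Lemma glued_bump_near y c : near y c -> glued_bump y = bump c y.
Proof.
move=> yc; have ex_c : exists c, near y c by exists c.
rewrite /glued_bump; case: excluded_middle_informative => [yc'|[]] /=.
  by rewrite (near_uniq yc' yc).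
exact: epsilon_spec.
Qed.

Lemma glued_bump_far y : ~ (exists c, near y c) -> glued_bump y = 0.
Proof.
move=> far; rewrite /glued_bump; case: excluded_middle_informative => // yc.
by case: far; exists (epsilon (inhabits 0) (near y)).
Qed.

Lemma glued_bump_center c : C c -> glued_bump c = v c.
Proof.
move=> Cc; have cc : near c c by split; rewrite ?distxx.
by rewrite (glued_bump_near cc) /bump distxx mul0r subr0 scale1r.
Qed.

Lemma norm_bump_le c y : C c -> dist y c <= rho ->
  eucl_norm (bump c y) <= k * (rho - dist y c).
Proof.
move=> Cc yc; rewrite eucl_normZ ger0_norm; last first.
  by rewrite subr_ge0 ler_pdivrMr ?mul1r.
have -> : k * (rho - dist y c) = (1 - dist y c / rho) * (k * rho).
  by field; rewrite gt_eqF.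
by rewrite ler_wpM2l ?v_small // subr_ge0 ler_pdivrMr ?mul1r.
Qed.

Lemma dist_bump_le c y y' : C c -> dist (bump c y) (bump c y') <= k * dist y y'.
Proof.
move=> Cc; rewrite /bump {1}/dist -scalerBl eucl_normZ.
have -> : 1 - dist y c / rho - (1 - dist y' c / rho) = (dist y' c - dist y c) / rho.
  by field; rewrite gt_eqF.
have v_rho : rho^-1 * eucl_norm (v c) <= k by rewrite mulrC ler_pdivrMr ?v_small.
rewrite normrM normfV (gtr0_norm rho_gt0) -mulrA [k * _]mulrC (distC y y').
by rewrite ler_pM ?normr_ge0 ?mulr_ge0 ?invr_ge0 ?eucl_norm_ge0 ?dist_dist_le // ltW.
Qed.

Lemma norm_glued_bump_far y c : C c -> rho <= dist y c ->
  eucl_norm (glued_bump y) <= k * (dist y c - rho).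
Proof.
move=> Cc yc; have k_yc : 0 <= k * (dist y c - rho) by rewrite mulr_ge0 ?subr_ge0.
case: (classic (exists c0, near y c0)) => [[c0 yc0]|far]; last first.
  by rewrite glued_bump_far // eucl_norm0.
have [Cc0 yc0_lt] := yc0; rewrite (glued_bump_near yc0).
apply: le_trans (norm_bump_le Cc0 (ltW yc0_lt)) _; rewrite ler_wpM2l //.
have c0c : c0 <> c by move=> c0c; move: yc0_lt; rewrite c0c ltNge yc.
have := C_sep Cc0 Cc c0c; have := dist_triangle c0 y c.
by rewrite (distC c0 y); lra.
Qed.

Lemma dist_glued_bump_near y y' c : near y' c ->
  dist (glued_bump y) (glued_bump y') <= k * dist y y'.
Proof.
move=> y'c; rewrite (glued_bump_near y'c); have [Cc y'c_lt] := y'c.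
have [yc|yc] := ltP (dist y c) rho.
  by rewrite (@glued_bump_near y c) //; apply: dist_bump_le.
apply: le_trans (dist_le_norm _ _) _.
have := norm_glued_bump_far Cc yc; have := norm_bump_le Cc (ltW y'c_lt).
have : k * (dist y c - dist y' c) <= k * dist y y'.
  by rewrite ler_wpM2l // (le_trans (ler_norm _) (dist_dist_le _ _ _)).
lra.
Qed.

Lemma glued_bump_lipschitz : lipschitz k glued_bump.
Proof.
move=> y y'; case: (classic (exists c, near y' c)) => [[c y'c]|far'].
  exact: dist_glued_bump_near y'c.
case: (classic (exists c, near y c)) => [[c yc]|far].
  by rewrite distC (distC y); apply: dist_glued_bump_near yc.
by rewrite !glued_bump_far // distxx mulr_ge0 ?dist_ge0.
Qed.
End GluedBumps.

Theorem lemma4p1 (d : nat) (r : R) (A : 'rV[R]_d -> Prop) :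
  (leq 2 d) -> (0 : R) < r -> r_separated r A ->
  exists Phi : 'rV[R]_d -> 'rV[R]_d,
    bilipschitz (16 * Num.max (3 * (d%:R : R) / r) 1) Phi /\
    (forall a, A a -> is_integer_point (Phi a)).
Proof.
(* The constant [16 * _] is parsed in Stdlib's [R_scope]. *)
move=> d_ge2 r_gt0 A_sep; rewrite RmultE IZRposE INRE /=.
set M := Num.max _ 1; pose s := 2 * M; pose rho := 2 * Num.sqrt (d%:R : R).
have M_ge1 : 1 <= M by rewrite le_max lexx orbT.
have three_d_le_Mr : 3 * (d%:R : R) <= M * r by rewrite -ler_pdivrMr // le_max lexx.
have sqrt_d_ge1 : 1 <= Num.sqrt (d%:R : R).
  by rewrite -[X in X <= _]sqrtr1 ler_sqrt // ler1n (leq_trans _ d_ge2).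
have sqrt_d_le : Num.sqrt (d%:R : R) <= d%:R.
  by rewrite -{2}[d%:R]sqr_sqrtr // ler_peMl ?(le_trans ler01).
have rho_gt0 : 0 < rho by rewrite /rho; lra.
have half_ge0 : 0 <= 2^-1 :> R by rewrite invr_ge0.
pose C c := exists2 a, A a & c = s *: a.
have C_sep c c' : C c -> C c' -> c <> c' -> 2 * rho <= dist c c'.
  move=> [a Aa ->] [b Ab ->] ab; have ab' : a <> b by move=> e; apply: ab; rewrite e.
  rewrite distZ gtr0_norm; last by rewrite /s; lra.
  have : s * r <= s * dist a b by rewrite ler_wpM2l ?A_sep //; rewrite /s; lra.
  rewrite /s /rho; nra.
have v_small c : C c -> eucl_norm (round_vec c - c) <= 2^-1 * rho.
  by move=> _; rewrite /rho mulrA mulVf ?pnatr_eq0 // mul1r; apply: dist_round_vec_le.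
exists (fun x => s *: x + glued_bump rho C (fun c => round_vec c - c) (s *: x)); split.
  by apply: (bilipschitz_scale_add (glued_bump_lipschitz half_ge0 rho_gt0 C_sep v_small));
    rewrite /s; nra.
move=> a Aa; rewrite (glued_bump_center _ rho_gt0 C_sep) //; last by exists a.
by rewrite addrC subrK; apply: round_vec_integer.
Qed.
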